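(* Let $\mathcal{A}$ be a complex unital Banach algebra, let $p,q\in\mathcal{A}$ be idempotents and $m\in\mathbb{N}$. Then $$p+q-pq+\sum_{k=2}^{m}\big((pq)^{k-1}p-(pq)^k\big)$$ is Drazin invertible (respectively, g-Drazin invertible) if and only if $1-(pq)^m$ is Drazin invertible (respectively, g-Drazin invertible).
   Context: $\mathcal{A}$ is a complex unital Banach algebra with unit $1$; an idempotent is an element $e$ with $e^2=e$. An element $a$ is Drazin invertible if there exists $b\in\mathcal{A}$ with $ab=ba$, $bab=b$, and $(a(1-ab))^n=0$ for some $n\in\mathbb{N}$; g-Drazin invertible if there exists $b$ with $ab=ba$, $bab=b$, and $a(1-ab)$ quasinilpotent (spectral radius $0$). The empty sum (for $m=1$) is $0$. *)

From mathcomp Require Import all_boot all_order all_algebra.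
From mathcomp Require Import complex.
From mathcomp Require Import reals.

Set Implicit Arguments.
Unset Strict Implicit.
Unset Printing Implicit Defensive.

Import Order.TTheory GRing.Theory Num.Theory.
Local Open Scope ring_scope.
Local Open Scope complex_scope.

Section BanachAlgebra.
Variables (R : realType).
Variable (A : unitAlgType R[i]).

Definition banach_algebra_norm (nrm : A -> R) : Prop :=
  [/\ forall x : A, 0 <= nrm x,
      forall x : A, nrm x = 0 -> x = 0,
      forall x y : A, nrm (x + y) <= nrm x + nrm y &
      forall (c : R[i]) (x : A), (nrm (c *: x))%:C = `|c| * (nrm x)%:C] /\
  [/\ forall x y : A, nrm (x * y) <= nrm x * nrm y,
      nrm 1 = 1 &
      forall u : nat -> A,
        (forall e : R, 0 < e -> exists N : nat, forall n k : nat,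
            (N <= n)%N -> (N <= k)%N -> nrm (u n - u k) < e) ->
        exists l : A, forall e : R, 0 < e -> exists N : nat, forall n : nat,
            (N <= n)%N -> nrm (u n - l) < e].

Definition drazin_invertible (a : A) : Prop :=
  exists b : A, [/\ a * b = b * a, b * a * b = b &
                    exists n : nat, (a * (1 - a * b)) ^+ n = 0].

(* a is quasinilpotent (spectral radius 0): its spectrum is contained
   in {0}, i.e. lambda 1 - a is invertible for every complex lambda <> 0. *)
Definition quasinilpotent (a : A) : Prop :=
  forall lambda : R[i], lambda != 0 -> (lambda%:A - a) \is a GRing.unit.

Definition gdrazin_invertible (a : A) : Prop :=
  exists b : A, [/\ a * b = b * a, b * a * b = b &
                    quasinilpotent (a * (1 - a * b))].
End BanachAlgebra.

From mathcomp Require Import all_boot all_order all_algebra.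
From mathcomp Require Import complex.
From mathcomp Require Import reals.

Set Implicit Arguments.
Unset Strict Implicit.
Unset Printing Implicit Defensive.

Import Order.TTheory GRing.Theory Num.Theory.
Local Open Scope ring_scope.
Local Open Scope complex_scope.

(* Write a := pq, e := 1 - q and s := sum_(k < m) a^k p.  Then x = 1 - (1 - s) e,
   and x is linked to 1 - a^m by moves that preserve (generalized) Drazin
   invertibility: Jacobson's lemma (1 - uv versus 1 - vu), Cline's formula
   (uv versus vu) and adding an orthogonal idempotent (u versus f + u when
   fu = uf = 0):
     x = 1 - ((1 - s) e) e ~ 1 - e (1 - s) e = q + e s e ~ e s e = (e s)(p e)
       ~ p e s ~ (1 - p) + p e s = 1 - a^m p ~ 1 - p a^m = 1 - a^m,
   where p e s = p - a^m p telescopes.  The three moves hold whenever the class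
   Q of admissible "defects" a (1 - a b) is stable under N |-> -N and
   XY |-> YX and 1 - N is invertible for N in Q; nilpotent and quasinilpotent
   elements both qualify. *)

Lemma unitrB_mulC (R : unitRingType) (L X Y : R) :
    (forall z, GRing.comm L z) -> L \is a GRing.unit ->
  L - X * Y \is a GRing.unit -> L - Y * X \is a GRing.unit.
Proof.
move=> cL uL uLXY; set v := (L - X * Y)^-1.
have cLV z : GRing.comm L^-1 z by apply/commr_sym/commrV/commr_sym.
have vl : Y * v * X * (L - Y * X) = Y * X.
  transitivity (Y * (v * (L - X * Y)) * X); last by rewrite mulVr // mulr1.
  by rewrite !(mulrBl, mulrBr) !mulrA -!(mulrA _ X L) -cL !mulrA.
have vr : (L - Y * X) * (Y * v * X) = Y * X.
  transitivity (Y * ((L - X * Y) * v) * X); last by rewrite mulrV // mulr1.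
  by rewrite !(mulrBl, mulrBr) !mulrA cL.
apply/unitrP; exists ((1 + Y * v * X) * L^-1); split.
  by rewrite -cLV -mulrA mulrDl mul1r vl subrK mulVr.
by rewrite mulrA mulrDr mulr1 vr subrK mulrV.
Qed.

Section Idempotent.

Variables (R : pzRingType) (e : R).
Hypothesis ee : e * e = e.

Lemma idem_mulC : e * (1 - e) = 0.
Proof. by rewrite mulrBr mulr1 ee subrr. Qed.

Lemma idemC_mul : (1 - e) * e = 0.
Proof. by rewrite mulrBl mul1r ee subrr. Qed.

Lemma idemC : (1 - e) * (1 - e) = 1 - e.
Proof. by rewrite [_ * (1 - e)]mulrBr mulr1 idemC_mul subr0. Qed.

End Idempotent.

Section DrazinWrt.

Variables (R : unitRingType) (Q : R -> Prop).

(* Q = nilpotent elements gives Drazin invertibility, Q = quasinilpotent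
   elements gives g-Drazin invertibility. *)
Definition drazin_wrt (a : R) :=
  exists b, [/\ a * b = b * a, b * a * b = b & Q (a * (1 - a * b))].

Definition spectral_idempotent (a pi : R) :=
  [/\ pi * pi = pi, pi * a = a * pi, a + pi \is a GRing.unit & Q (a * pi)].

Lemma spectral_idempotent_drazin a pi :
  spectral_idempotent a pi -> drazin_wrt a.
Proof.
case=> pp pa ua Qapi; set v := (a + pi)^-1.
have cav : GRing.comm a v by apply/commrV; rewrite /GRing.comm mulrDl mulrDr pa.
have cpiv : GRing.comm pi v by apply/commrV; rewrite /GRing.comm mulrDl mulrDr pa.
have cqa : GRing.comm (1 - pi) a := commr_sym (commrB (commr1 a) (commr_sym pa)).
have cqv : GRing.comm (1 - pi) v := commr_sym (commrB (commr1 v) (commr_sym cpiv)).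
have aq : a * (1 - pi) = (a + pi) * (1 - pi) by rewrite mulrDl idem_mulC // addr0.
have ab : a * (v * (1 - pi)) = 1 - pi.
  by rewrite mulrA cav -mulrA aq mulrA mulVr // mul1r.
have ba : v * (1 - pi) * a = 1 - pi by rewrite -mulrA cqa mulrA -cav -mulrA ab.
exists (v * (1 - pi)); split.
- by rewrite ab ba.
- by rewrite ba mulrA cqv -mulrA idemC.
- by rewrite ab subKr.
Qed.

Hypotheses (Q_unit1B : forall N, Q N -> 1 - N \is a GRing.unit)
           (Q_opp : forall N, Q N -> Q (- N))
           (Q_swap : forall X Y, Q (X * Y) -> Q (Y * X)).

Lemma Q_unit1D N : Q N -> 1 + N \is a GRing.unit.
Proof. by move/Q_opp/Q_unit1B; rewrite opprK. Qed.

Lemma drazin_spectral_idempotent a :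
  drazin_wrt a -> exists pi, spectral_idempotent a pi.
Proof.
case=> b [cab bab Qa]; exists (1 - a * b).
have abb : a * b * b = b by rewrite cab.
have abab : a * b * (a * b) = a * b by rewrite -!mulrA (mulrA b) bab.
set pi := 1 - a * b in Qa *.
have ab : a * b = 1 - pi by rewrite subKr.
have pp : pi * pi = pi by rewrite idemC.
have pa : pi * a = a * pi by rewrite mulrBl mulrBr mul1r mulr1 -mulrA -cab mulrA.
have pb : pi * b = 0 by rewrite mulrBl mul1r abb subrr.
have bp : b * pi = 0 by rewrite mulrBr mulr1 mulrA bab subrr.
clearbody pi.
have e1 : (a + pi) * (b + pi) = 1 + a * pi.
  by rewrite mulrDl !mulrDr pb pp ab add0r addrAC subrK.
have e2 : (b + pi) * (a + pi) = 1 + a * pi.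
  by rewrite mulrDl !mulrDr bp pp -cab ab pa addr0 addrA addrAC subrK.
have : (a + pi) * (b + pi) \is a GRing.unit by rewrite e1 Q_unit1D.
by rewrite unitrM_comm /GRing.comm ?e1 ?e2 // => /andP[].
Qed.

Lemma Q_fixr_eq0 N z : Q N -> z * N = z -> z = 0.
Proof.
move=> /Q_unit1B uN zN; apply: (mulIr uN).
by rewrite mulrBr mulr1 zN subrr mul0r.
Qed.

Lemma Q_fixl_eq0 N z : Q N -> N * z = z -> z = 0.
Proof.
move=> /Q_unit1B uN Nz; apply: (mulrI uN).
by rewrite mulrBl mul1r Nz subrr mulr0.
Qed.

Lemma drazin_wrt_Jacobson a c :
  drazin_wrt (1 - a * c) <-> drazin_wrt (1 - c * a).
Proof.
suff imp x y : drazin_wrt (1 - x * y) -> drazin_wrt (1 - y * x).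
  by split; apply: imp.
move=> /drazin_spectral_idempotent[pi [pp pal ual Qn]].
set al := 1 - x * y in pal ual Qn.
have xy : x * y = 1 - al by rewrite subKr.
have alx : x * (1 - y * x) = al * x.
  by rewrite mulrBr mulr1 mulrA xy mulrBl mul1r subKr.
have aly : (1 - y * x) * y = y * al.
  by rewrite mulrBl mul1r -mulrA xy mulrBr mulr1 subKr.
clearbody al; set N := al * pi in Qn.
have calN : GRing.comm al (1 - N).
  by rewrite /GRing.comm mulrBr mulrBl mulr1 mul1r /N -mulrA pal.
have pi_al : pi * (1 - al) = pi * (1 - N).
  by rewrite !mulrBr !mulr1 /N mulrA pal -mulrA pp.
(* u inverts 1 - al = x y on the range of pi, and y u x is then a spectral
   idempotent of 1 - y x. *)
set u := pi * (1 - N)^-1.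
have calu : GRing.comm al u := commrM (commr_sym pal) (commrV calN).
have u_al : u * (1 - al) = pi.
  have cNal : GRing.comm (1 - N) (1 - al) := commrB (commr1 _) (commr_sym calN).
  by rewrite /u -mulrA -(commrV (commr_sym cNal)) mulrA pi_al mulrK ?Q_unit1B.
have piu : pi * u = u by rewrite /u mulrA pp.
clearbody u.
apply: (@spectral_idempotent_drazin _ (y * u * x)); split.
- by rewrite !mulrA -(mulrA _ x y) xy -(mulrA y u) u_al -(mulrA y pi) piu.
- by rewrite -!mulrA alx [RHS]mulrA aly -!mulrA (mulrA al) calu -mulrA.
- have -> : 1 - y * x + y * u * x = 1 - y * ((1 - u) * x).
    by rewrite mulrBl mul1r mulrBr opprB addrA addrAC mulrA.
  apply: (@unitrB_mulC _ 1 ((1 - u) * x)) => [z||]; first exact/commr_sym/commr1.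
    exact: unitr1.
  by rewrite -mulrA xy mulrBl mul1r u_al opprB addrCA subKr addrC.
- rewrite !mulrA aly -!mulrA; apply: Q_swap.
  by rewrite -!mulrA xy u_al.
Qed.

Lemma drazin_wrt_Cline a c : drazin_wrt (a * c) <-> drazin_wrt (c * a).
Proof.
suff imp x y : drazin_wrt (x * y) -> drazin_wrt (y * x) by split; apply: imp.
move=> [b [cb bb Qb]].
have xybb z : z * x * y * b * b = z * b.
  by rewrite -!mulrA (mulrA x) (mulrA _ b) cb bb.
have bbxy z : z * b * b * x * y = z * b by rewrite -!mulrA -cb (mulrA b) bb.
have bxyb z : z * b * x * y * b = z * b.
  by rewrite -!mulrA (mulrA x) (mulrA b) bb.
exists (y * b * b * x); split.
- by rewrite !mulrA xybb bbxy.
- by rewrite !mulrA bbxy bxyb.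
- have -> : y * x * (1 - y * x * (y * b * b * x)) = y * ((1 - x * y * b) * x).
    by rewrite !mulrA xybb !(mulrBr, mulrBl) !mulr1 ?mul1r !mulrA.
  apply: Q_swap; rewrite -(mulrA _ x y).
  by rewrite -(commrB (commr1 _) (commrM (commr_refl _) cb)).
Qed.

Lemma drazin_wrt_idemD f u : f * f = f -> f * u = 0 -> u * f = 0 ->
  drazin_wrt (f + u) <-> drazin_wrt u.
Proof.
move=> ff fu uf; split.
  move=> /drazin_spectral_idempotent[pi [pp piv uv Qv]].
  have fv : f * (f + u) = f by rewrite mulrDr ff fu addr0.
  have vf : (f + u) * f = f by rewrite mulrDl ff uf addr0.
  have fpi : f * pi = 0.
    apply: (Q_fixr_eq0 Qv).
    by rewrite !mulrA -(mulrA f) piv mulrA fv -mulrA pp.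
  have pif : pi * f = 0.
    apply: (Q_fixl_eq0 Qv).
    by rewrite -!mulrA (mulrA pi) pp mulrA -piv -mulrA vf.
  apply: (@spectral_idempotent_drazin _ (pi + f)); split.
  - by rewrite mulrDl !mulrDr pp fpi pif ff addr0 add0r.
  - rewrite mulrDl mulrDr fu uf !addr0.
    by move: piv; rewrite mulrDl mulrDr pif fpi !add0r.
  - by rewrite addrCA addrC [u + f]addrC.
  - by move: Qv; rewrite mulrDl mulrDr fpi uf add0r addr0.
move=> [b [cub bub Qu]].
have fb : f * b = 0 by rewrite -bub -cub -!mulrA (mulrA f) fu mul0r.
have bf : b * f = 0.
  by rewrite -bub -(mulrA b) cub !mulrA -(mulrA _ u f) uf mulr0.
have vw : (f + u) * (f + b) = f + u * b.
  by rewrite !(mulrDl, mulrDr) ff fb uf addr0 add0r.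
have wv : (f + b) * (f + u) = f + u * b.
  by rewrite !(mulrDl, mulrDr) ff fu bf cub addr0 add0r.
exists (f + b); split.
- by rewrite vw wv.
- by rewrite wv !(mulrDl, mulrDr) ff fb -(mulrA u b f) bf mulr0 cub bub addr0 add0r.
- suff -> : (f + u) * (1 - (f + u) * (f + b)) = u * (1 - u * b) by [].
  rewrite vw !(mulrBr, mulrDl, mulrDr) !mulr1 ff uf (mulrA f u) fu mul0r.
  by rewrite addr0 add0r [f + u]addrC addrKA.
Qed.

Section Idempotents.

Variables p q : R.
Hypotheses (pp : p * p = p) (qq : q * q = q).

Lemma mul_idem_pqX k : p * (p * q) ^+ k.+1 = (p * q) ^+ k.+1.
Proof. by rewrite exprS !mulrA pp. Qed.

Lemma mul_idem_pqXp k : p * ((p * q) ^+ k * p) = (p * q) ^+ k * p.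
Proof. by case: k => [|k]; rewrite ?expr0 ?mul1r ?pp // mulrA mul_idem_pqX. Qed.

Lemma idempotent_sum_expansion m : (0 < m)%N ->
  p + q - p * q + \sum_(2 <= k < m.+1) ((p * q) ^+ (k - 1) * p - (p * q) ^+ k)
    = 1 - (1 - \sum_(k < m) (p * q) ^+ k * p) * (1 - q).
Proof.
case: m => // m _.
rewrite !big_add1 /= big_mkord mulrBl mul1r opprB addrCA subKr mulr_suml.
rewrite big_ord_recl expr0 mul1r mulrBr mulr1 [p + q]addrC [RHS]addrC -!addrA.
do 3 congr (_ + _); apply: eq_bigr => i _.
by rewrite subn1 mulrBr mulr1 -mulrA -exprSr.
Qed.

Lemma idempotent_sum_telescope m :
  p * (1 - q) * \sum_(k < m) (p * q) ^+ k * p = p - (p * q) ^+ m * p.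
Proof.
rewrite mulrBr mulr1 mulrBl !mulr_sumr -sumrB.
under eq_bigr => k _ do rewrite mul_idem_pqXp mulrA -exprS -opprB.
rewrite sumrN -(big_mkord xpredT (fun k => (p * q) ^+ k.+1 * p - (p * q) ^+ k * p)).
by rewrite telescope_sumr // expr0 mul1r opprB.
Qed.

Lemma drazin_wrt_idempotents m : (0 < m)%N ->
  drazin_wrt (p + q - p * q
              + \sum_(2 <= k < m.+1) ((p * q) ^+ (k - 1) * p - (p * q) ^+ k))
  <-> drazin_wrt (1 - (p * q) ^+ m).
Proof.
move=> m_gt0; rewrite idempotent_sum_expansion //.
set s := \sum_(k < m) (p * q) ^+ k * p.
have sp : s * p = s by rewrite mulr_suml; apply: eq_bigr => k _; rewrite -mulrA pp.
set u := (1 - q) * s * (p * (1 - q)).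
have qu : q * u = 0 by rewrite /u !mulrA idem_mulC // !mul0r.
have uq : u * q = 0 by rewrite /u -!mulrA idemC_mul // !mulr0.
set w := p * (1 - q) * s.
have pw : (1 - p) * w = 0 by rewrite /w !mulrA idemC_mul // !mul0r.
have wp : w * (1 - p) = 0 by rewrite /w -mulrA [s * _]mulrBr mulr1 sp subrr mulr0.
rewrite -[X in 1 - _ * X](idemC qq) mulrA drazin_wrt_Jacobson.
have -> : 1 - (1 - q) * ((1 - s) * (1 - q)) = q + u.
  rewrite /u [in RHS]mulrA -(mulrA _ s p) sp [(1 - s) * _]mulrBl mul1r mulrBr idemC //.
  by rewrite mulrA opprB addrCA subKr addrC.
rewrite (drazin_wrt_idemD qq qu uq) /u drazin_wrt_Cline.
rewrite mulrA -(mulrA p) (idemC qq) -/w -(drazin_wrt_idemD (idemC pp) pw wp).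
rewrite /w idempotent_sum_telescope addrA subrK drazin_wrt_Jacobson.
by case: m m_gt0 {s sp u qu uq w pw wp} => // m _; rewrite mul_idem_pqX.
Qed.

End Idempotents.

End DrazinWrt.

Definition nilpotent (R : pzRingType) (N : R) := exists n, N ^+ n = 0.

Lemma nilpotent_unit1B (R : unitRingType) (N : R) :
  nilpotent N -> 1 - N \is a GRing.unit.
Proof.
case=> n Nn; have := subrX1 N n; rewrite Nn sub0r => /(congr1 -%R).
rewrite opprK -mulNr opprB => eS.
have cS : GRing.comm (1 - N) (\sum_(i < n) N ^+ i).
  apply: commr_sum => i _; apply/commr_sym/commrB; first exact: commr1.
  exact/commr_sym/commrX/commr_refl.
by apply/unitrP; exists (\sum_(i < n) N ^+ i); rewrite -cS -eS.
Qed.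

Lemma nilpotent_opp (R : pzRingType) (N : R) : nilpotent N -> nilpotent (- N).
Proof. by case=> n Nn; exists n; rewrite exprNn Nn mulr0. Qed.

Lemma nilpotent_swap (R : pzRingType) (X Y : R) :
  nilpotent (X * Y) -> nilpotent (Y * X).
Proof.
case=> n XYn; exists n.+1.
have -> : (Y * X) ^+ n.+1 = Y * (X * Y) ^+ n * X.
  elim: n {XYn} => [|n IHn]; first by rewrite expr1 expr0 mulr1.
  by rewrite exprSr IHn exprSr !mulrA.
by rewrite XYn mulr0 mul0r.
Qed.

Lemma quasinilpotent_unit1B (R : realType) (A : unitAlgType R[i]) (N : A) :
  quasinilpotent N -> 1 - N \is a GRing.unit.
Proof. by move=> /(_ 1 (oner_neq0 _)); rewrite scale1r. Qed.

Lemma quasinilpotent_opp (R : realType) (A : unitAlgType R[i]) (N : A) :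
  quasinilpotent N -> quasinilpotent (- N).
Proof.
move=> qN l l0; have := qN (- l); rewrite oppr_eq0 => /(_ l0).
by rewrite scaleNr -opprD unitrN opprK addrC.
Qed.

Lemma quasinilpotent_swap (R : realType) (A : unitAlgType R[i]) (X Y : A) :
  quasinilpotent (X * Y) -> quasinilpotent (Y * X).
Proof.
move=> qXY l l0; apply: unitrB_mulC (qXY l l0); first exact: comm_alg.
by rewrite scaler_unit ?unitr1 // unitfE.
Qed.

Theorem corollary3p2 (R : realType) (A : unitAlgType R[i]) (nrm : A -> R)
    (hA : banach_algebra_norm nrm) (p q : A) (m : nat) :
  p * p = p -> q * q = q -> (1 <= m)%N ->
  let x := p + q - p * q
           + \sum_(2 <= k < m.+1) ((p * q) ^+ (k - 1) * p - (p * q) ^+ k) in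
  (drazin_invertible x <-> drazin_invertible (1 - (p * q) ^+ m)) /\
  (gdrazin_invertible x <-> gdrazin_invertible (1 - (p * q) ^+ m)).
Proof.
move=> pp qq m_gt0 x; split.
- exact: (drazin_wrt_idempotents (@nilpotent_unit1B _) (@nilpotent_opp _)
            (@nilpotent_swap _) pp qq m_gt0).
- exact: (drazin_wrt_idempotents (@quasinilpotent_unit1B _ _)
            (@quasinilpotent_opp _ _) (@quasinilpotent_swap _ _) pp qq m_gt0).
Qed.
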